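(* Let $I$ be a nonempty open real interval, let $\varphi:I\to\mathbb{R}$ be a strictly monotone function, let $f:I\to\mathbb{R}$ be a function that is not identically zero, and let $t\in\,]0,1[\,$. Then the following assertions are equivalent: (i) $(\varphi,f)$ satisfies \[ \big(tf(x)+(1-t)f(y)\big)\varphi(tx+(1-t)y)=tf(x)\varphi(x)+(1-t)f(y)\varphi(y) \qquad\text{for all } x,y\in I; \] (ii) $f$ is nowhere zero on $I$, $f$ and $\varphi$ are twice differentiable on $I$ with $2f'\varphi'+f\varphi''=0$ on $I$, and there exists $p\in\mathbb{R}$ with $(t-\frac12)p=0$ such that $f''=pf$ on $I$; (iii) $f$ is nowhere zero on $I$ and there exists $p\in\mathbb{R}$ with $(t-\frac12)p=0$ such that $(f,f\cdot\varphi)\sim(S_p,C_p)$ on $I$.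
   Context: For $p\in\mathbb{R}$, the functions $S_p,C_p:\mathbb{R}\to\mathbb{R}$ are defined by $S_p(x)=\sin(\sqrt{-p}\,x)$, $C_p(x)=\cos(\sqrt{-p}\,x)$ if $p<0$; $S_p(x)=x$, $C_p(x)=1$ if $p=0$; $S_p(x)=\sinh(\sqrt{p}\,x)$, $C_p(x)=\cosh(\sqrt{p}\,x)$ if $p>0$. Two pairs of functions $(f,g):I\to\mathbb{R}^2$ and $(h,k):I\to\mathbb{R}^2$ are called equivalent, written $(f,g)\sim(h,k)$, if there exist constants $a,b,c,d\in\mathbb{R}$ with $ad\neq cb$ such that $h=af+bg$ and $k=cf+dg$ on $I$. *)

From Stdlib Require Import Reals.
From Coquelicot Require Import Coquelicot.
Open Scope R_scope.

Definition S_ (p x : R) : R :=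
  if Rlt_dec p 0 then sin (sqrt (- p) * x)
  else if Req_EM_T p 0 then x
  else sinh (sqrt p * x).

Definition C_ (p x : R) : R :=
  if Rlt_dec p 0 then cos (sqrt (- p) * x)
  else if Req_EM_T p 0 then 1
  else cosh (sqrt p * x).

(* Membership in the open interval ]a,b[ with a, b extended reals
   (this covers all nonempty open real intervals when a < b). *)
Definition in_I (a b : Rbar) (x : R) : Prop := Rbar_lt a x /\ Rbar_lt x b.

Definition strictly_monotone_on (a b : Rbar) (phi : R -> R) : Prop :=
  (forall x y, in_I a b x -> in_I a b y -> x < y -> phi x < phi y) \/
  (forall x y, in_I a b x -> in_I a b y -> x < y -> phi y < phi x).

Definition pair_equiv_on (a b : Rbar) (f g h k : R -> R) : Prop :=
  exists c1 c2 c3 c4 : R, c1 * c4 <> c3 * c2 /\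
    forall x, in_I a b x ->
      h x = c1 * f x + c2 * g x /\ k x = c3 * f x + c4 * g x.

Definition twice_diff_on (a b : Rbar) (f : R -> R) : Prop :=
  forall x, in_I a b x -> ex_derive f x /\ ex_derive (Derive f) x.

(* After flipping signs we may assume f > 0 and phi increasing. With m = t x + (1 - t) y the
   equation reads t f(x) (phi m - phi x) = (1 - t) f(y) (phi y - phi m). This bounds f locally
   from above and below, which forces phi to be continuous, and it expresses f through phi, so
   f is as regular as phi. Integrating the equation over the pairs (m - (1 - t) s, m + t s),
   all of t-mean m, writes phi m as a quotient of two integrals that are one degree smoother
   than f and f phi; bootstrapping makes f and phi twice differentiable. Differentiating the
   equation twice along these pairs gives (f phi)'' = phi f'', i.e. 2 f' phi' + f phi'' = 0,
   and t^2 q(y) = (1 - t)^2 q(x) for x < y, where q = f''/f; so q is a constant p with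
   (2 t - 1) p = 0. Then f and f phi are solutions of u'' = p u with nonzero Wronskian f^2 phi',
   hence a basis of the solution space spanned by S_p and C_p. Conversely, every solution
   satisfies t u(x) + (1 - t) u(y) = k u(m) with k independent of u (the addition theorem if
   t = 1/2, affine solutions if p = 0); applied to f and f phi this is the equation. *)

From Stdlib Require Import Reals Lra.
From Coquelicot Require Import Coquelicot.
Open Scope R_scope.

(** * Open sets and regularity classes *)

Lemma open_Rabs (U : R -> Prop) (x : R) :
  open U -> U x -> exists e : posreal, forall y, Rabs (y - x) < e -> U y.
Proof. intros HU Hx. destruct (HU x Hx) as [e He]. exists e. intros y Hy. now apply He. Qed.

Lemma open_Rabs_lt (c r : R) : open (fun y => Rabs (y - c) < r).
Proof.
  apply (open_ext (fun y => c - r < y /\ y < c + r)).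
  - intros y. split; intros H; [apply Rabs_def1 | apply Rabs_def2 in H]; lra.
  - apply open_and; [apply open_gt | apply open_lt].
Qed.

Lemma open_comp_aff (U : R -> Prop) (al be : R) :
  open U -> open (fun s => U (al * s + be)).
Proof.
  intros HU. apply (open_comp (fun s => al * s + be)); auto.
  intros s _. apply (ex_derive_continuous (fun s => al * s + be)). auto_derive; auto.
Qed.

Lemma open_in_I (a b : Rbar) : open (in_I a b).
Proof. apply open_and; [apply open_Rbar_gt | apply open_Rbar_lt]. Qed.

Lemma is_connected_in_I (a b : Rbar) : is_connected (in_I a b).
Proof.
  intros x y z [Hxa Hxb] [Hya Hyb] Hz. split.
  - destruct a as [a| |]; simpl in *; auto; lra.
  - destruct b as [b| |]; simpl in *; auto; lra.
Qed.

Lemma is_connected_comb (J : R -> Prop) (x y t : R) :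
  is_connected J -> J x -> J y -> 0 <= t <= 1 -> J (t * x + (1 - t) * y).
Proof.
  intros HJ Hx Hy Ht. destruct (Rle_dec x y).
  - apply (HJ x y); auto. nra.
  - apply (HJ y x); auto. nra.
Qed.

Lemma locally_open_ext (U : R -> Prop) (u v : R -> R) (x : R) :
  open U -> U x -> (forall y, U y -> u y = v y) -> locally x (fun y => u y = v y).
Proof. intros HU Hx Huv. now apply (locally_open U). Qed.

Lemma Derive_ext_open (U : R -> Prop) (u v : R -> R) (x : R) :
  open U -> U x -> (forall y, U y -> u y = v y) -> Derive u x = Derive v x.
Proof. intros HU Hx Huv. apply Derive_ext_loc. now apply (locally_open_ext U). Qed.

Lemma is_derive_zero_open (U : R -> Prop) (u : R -> R) (x l : R) :
  open U -> U x -> (forall y, U y -> u y = 0) -> is_derive u x l -> l = 0.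
Proof.
  intros HU Hx Hu Hd. rewrite <- (is_derive_unique u x l Hd).
  rewrite (Derive_ext_open U u (fun _ => 0)); auto. apply Derive_const.
Qed.

Definition cont_on (U : R -> Prop) (u : R -> R) : Prop := forall y, U y -> continuous u y.
Definition diff_on (U : R -> Prop) (u : R -> R) : Prop := forall y, U y -> ex_derive u y.
(* [twice_diff_on a b] is [diff2_on (in_I a b)] by conversion. *)
Definition diff2_on (U : R -> Prop) (u : R -> R) : Prop :=
  forall y, U y -> ex_derive u y /\ ex_derive (Derive u) y.

Record regularity (K : (R -> Prop) -> (R -> R) -> Prop) : Prop := {
  reg_local : forall U u, (forall y, U y -> exists V, open V /\ V y /\ K V u) -> K U u;
  reg_ext : forall U u v, open U -> (forall y, U y -> u y = v y) -> K U u -> K U v;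
  reg_sub : forall U V u, (forall y, V y -> U y) -> K U u -> K V u;
  reg_const : forall U c, open U -> K U (fun _ => c);
  reg_plus : forall U u v, open U -> K U u -> K U v -> K U (fun y => u y + v y);
  reg_minus : forall U u v, open U -> K U u -> K U v -> K U (fun y => u y - v y);
  reg_mult : forall U u v, open U -> K U u -> K U v -> K U (fun y => u y * v y);
  reg_div : forall U u v, open U -> K U u -> K U v -> (forall y, U y -> v y <> 0) ->
    K U (fun y => u y / v y);
  reg_comp_aff : forall U V u al be, open V -> K U u -> (forall y, V y -> U (al * y + be)) ->
    K V (fun y => u (al * y + be)) }.

Lemma regularity_cont : regularity cont_on.
Proof.
  split; unfold cont_on.
  - intros U u H y Hy. destruct (H y Hy) as [V [_ [HVy HV]]]. auto.
  - intros U u v HU Huv Hu y Hy. unfold continuous. rewrite <- (Huv y Hy).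
    apply (filterlim_ext_loc u v); [now apply (locally_open_ext U) | apply Hu, Hy].
  - intros U V u HUV Hu y Hy. apply Hu, HUV, Hy.
  - intros U c _ y _. apply continuous_const.
  - intros U u v _ Hu Hv y Hy. apply (continuous_plus u v); auto.
  - intros U u v _ Hu Hv y Hy. apply (continuous_minus u v); auto.
  - intros U u v _ Hu Hv y Hy. apply (continuous_mult u v); auto.
  - intros U u v _ Hu Hv Hn y Hy. apply (continuous_mult u (fun y => / v y)); auto.
    apply continuous_Rinv_comp; auto.
  - intros U V u al be _ Hu HUV y Hy. apply (continuous_comp (fun y => al * y + be) u).
    + apply (ex_derive_continuous (fun y => al * y + be)). auto_derive; auto.
    + auto.
Qed.

Lemma regularity_diff : regularity diff_on.
Proof.
  split; unfold diff_on.
  - intros U u H y Hy. destruct (H y Hy) as [V [_ [HVy HV]]]. auto.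
  - intros U u v HU Huv Hu y Hy. apply (ex_derive_ext_loc u v); auto.
    now apply (locally_open_ext U).
  - intros U V u HUV Hu y Hy. apply Hu, HUV, Hy.
  - intros U c _ y _. apply ex_derive_const.
  - intros U u v _ Hu Hv y Hy. specialize (Hu y Hy). specialize (Hv y Hy). auto_derive; auto.
  - intros U u v _ Hu Hv y Hy. specialize (Hu y Hy). specialize (Hv y Hy). auto_derive; auto.
  - intros U u v _ Hu Hv y Hy. specialize (Hu y Hy). specialize (Hv y Hy). auto_derive; auto.
  - intros U u v _ Hu Hv Hn y Hy. specialize (Hu y Hy). specialize (Hv y Hy).
    specialize (Hn y Hy). auto_derive; auto.
  - intros U V u al be _ Hu HUV y Hy. specialize (Hu _ (HUV y Hy)). auto_derive; auto.
Qed.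

Lemma diff2_on_derive (U : R -> Prop) (u u1 : R -> R) :
  open U -> (forall y, U y -> is_derive u y (u1 y)) -> diff_on U u1 -> diff2_on U u.
Proof.
  intros HU Hd H1 y Hy. split; [exists (u1 y); now apply Hd|].
  apply (ex_derive_ext_loc u1); auto.
  apply (locally_open U); auto. intros z Hz. symmetry. apply is_derive_unique, Hd, Hz.
Qed.

Ltac fold_Derive := repeat match goal with
  |- context [Derive (fun x : R => ?g x)] => change (Derive (fun x : R => g x)) with (Derive g) end.

Lemma diff2_on_diff (U : R -> Prop) (u : R -> R) : diff2_on U u -> diff_on U u.
Proof. intros H y Hy. apply H, Hy. Qed.

Lemma diff2_on_diff_Derive (U : R -> Prop) (u : R -> R) : diff2_on U u -> diff_on U (Derive u).
Proof. intros H y Hy. apply H, Hy. Qed.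

Lemma diff2_on_is_derive (U : R -> Prop) (u : R -> R) (y : R) :
  diff2_on U u -> U y -> is_derive u y (Derive u y).
Proof. intros H Hy. apply Derive_correct, H, Hy. Qed.

Lemma diff2_on_mult (U : R -> Prop) (u v : R -> R) :
  open U -> diff2_on U u -> diff2_on U v -> diff2_on U (fun y => u y * v y).
Proof.
  intros HU Hu Hv. pose proof regularity_diff as D.
  apply (diff2_on_derive U _ (fun y => Derive u y * v y + u y * Derive v y)); auto.
  - intros y Hy. destruct (Hu y Hy), (Hv y Hy). auto_derive; auto. fold_Derive. ring.
  - pose proof (diff2_on_diff _ _ Hu). pose proof (diff2_on_diff_Derive _ _ Hu).
    pose proof (diff2_on_diff _ _ Hv). pose proof (diff2_on_diff_Derive _ _ Hv).
    apply (reg_plus _ D); auto; apply (reg_mult _ D); auto.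
Qed.

Lemma diff2_on_div (U : R -> Prop) (u v : R -> R) :
  open U -> diff2_on U u -> diff2_on U v -> (forall y, U y -> v y <> 0) ->
  diff2_on U (fun y => u y / v y).
Proof.
  intros HU Hu Hv Hn. pose proof regularity_diff as D.
  apply (diff2_on_derive U _ (fun y => (Derive u y * v y - u y * Derive v y) / (v y * v y))); auto.
  - intros y Hy. destruct (Hu y Hy), (Hv y Hy). specialize (Hn y Hy).
    auto_derive; auto. fold_Derive. field; auto.
  - pose proof (diff2_on_diff _ _ Hu). pose proof (diff2_on_diff_Derive _ _ Hu).
    pose proof (diff2_on_diff _ _ Hv). pose proof (diff2_on_diff_Derive _ _ Hv).
    apply (reg_div _ D); auto.
    + apply (reg_minus _ D); auto; apply (reg_mult _ D); auto.
    + apply (reg_mult _ D); auto.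
Qed.

Lemma regularity_diff2 : regularity diff2_on.
Proof.
  pose proof regularity_diff as D. split.
  - intros U u H y Hy. destruct (H y Hy) as [V [_ [HVy HV]]]. auto.
  - intros U u v HU Huv Hu. apply (diff2_on_derive U v (Derive u)); auto.
    + intros y Hy. apply (is_derive_ext_loc u); [now apply (locally_open_ext U) |].
      now apply (diff2_on_is_derive U).
    + now apply diff2_on_diff_Derive.
  - intros U V u HUV Hu y Hy. apply Hu, HUV, Hy.
  - intros U c HU. apply (diff2_on_derive U _ (fun _ => 0)); auto.
    + intros y _. apply (is_derive_const c).
    + apply (reg_const _ D); auto.
  - intros U u v HU Hu Hv. apply (diff2_on_derive U _ (fun y => Derive u y + Derive v y)); auto.
    + intros y Hy. apply (is_derive_plus u v); now apply (diff2_on_is_derive U).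
    + apply (reg_plus _ D); auto; now apply diff2_on_diff_Derive.
  - intros U u v HU Hu Hv. apply (diff2_on_derive U _ (fun y => Derive u y - Derive v y)); auto.
    + intros y Hy. apply (is_derive_minus u v); now apply (diff2_on_is_derive U).
    + apply (reg_minus _ D); auto; now apply diff2_on_diff_Derive.
  - exact diff2_on_mult.
  - exact diff2_on_div.
  - intros U V u al be HV Hu HUV.
    apply (diff2_on_derive V _ (fun y => al * Derive u (al * y + be))); auto.
    + intros y Hy. destruct (Hu _ (HUV y Hy)). auto_derive; auto. fold_Derive. ring.
    + apply (reg_mult _ D); auto.
      * apply (reg_const _ D); auto.
      * apply (reg_comp_aff _ D U); auto. now apply diff2_on_diff_Derive.
Qed.

Lemma reg_scal_inv (K : (R -> Prop) -> (R -> R) -> Prop) (U : R -> Prop) (u : R -> R) (c : R) :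
  regularity K -> open U -> c <> 0 -> K U (fun y => c * u y) -> K U u.
Proof.
  intros HK HU Hc Hu. apply (reg_ext _ HK U (fun y => / c * (c * u y))); auto.
  - intros y _. now field.
  - apply (reg_mult _ HK); auto. apply (reg_const _ HK); auto.
Qed.

Lemma reg_shift (K : (R -> Prop) -> (R -> R) -> Prop) (U V : R -> Prop) (u : R -> R) (c : R) :
  regularity K -> open V -> K U u -> (forall y, V y -> U (c + y)) -> K V (fun y => u (c + y)).
Proof.
  intros HK HV Hu HUV. apply (reg_ext _ HK V (fun y => u (1 * y + c))); auto.
  - intros y _. f_equal. ring.
  - apply (reg_comp_aff _ HK U); auto. intros y Hy. replace (1 * y + c) with (c + y) by ring. auto.
Qed.

(** * The functional equation *)

Definition mean_equation (J : R -> Prop) (f phi : R -> R) (t : R) : Prop :=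
  forall x y, J x -> J y ->
    (t * f x + (1 - t) * f y) * phi (t * x + (1 - t) * y) = t * f x * phi x + (1 - t) * f y * phi y.

Definition strictly_increasing (J : R -> Prop) (phi : R -> R) : Prop :=
  forall x y, J x -> J y -> x < y -> phi x < phi y.

Definition strictly_monotone (J : R -> Prop) (phi : R -> R) : Prop :=
  strictly_increasing J phi \/ strictly_increasing J (fun x => - phi x).

Lemma strictly_monotone_on_in_I (a b : Rbar) (phi : R -> R) :
  strictly_monotone_on a b phi -> strictly_monotone (in_I a b) phi.
Proof.
  intros [H|H]; [left; exact H | right]. intros x y Hx Hy Hxy. specialize (H x y Hx Hy Hxy). lra.
Qed.

Lemma strictly_monotone_inj (J : R -> Prop) (phi : R -> R) (x y : R) :
  strictly_monotone J phi -> J x -> J y -> x <> y -> phi x <> phi y.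
Proof.
  intros Hm Hx Hy Hne. destruct (Rdichotomy x y Hne) as [Hl|Hl];
    destruct Hm as [Hm|Hm]; [specialize (Hm x y) | specialize (Hm x y) | specialize (Hm y x) |
    specialize (Hm y x)]; simpl in Hm; intuition lra.
Qed.

Lemma mean_equation_balance (J : R -> Prop) (f phi : R -> R) (t x y : R) :
  mean_equation J f phi t -> J x -> J y ->
  t * f x * (phi (t * x + (1 - t) * y) - phi x)
  = (1 - t) * f y * (phi y - phi (t * x + (1 - t) * y)).
Proof. intros H Hx Hy. specialize (H x y Hx Hy). lra. Qed.

Section General_solution.

Variables (J : R -> Prop) (f phi : R -> R) (t : R).
Hypotheses (J_conn : is_connected J) (t_range : 0 < t < 1)
  (feq : mean_equation J f phi t) (phi_mono : strictly_monotone J phi).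

Lemma mean_in (x y : R) : J x -> J y -> J (t * x + (1 - t) * y).
Proof. intros Hx Hy. apply is_connected_comb; auto. lra. Qed.

(* f z = 0 turns the balance equation at (z, x0) into (1 - t) f x0 (phi x0 - phi m) = 0. *)
Lemma solution_f_neq0 :
  (exists x0, J x0 /\ f x0 <> 0) -> forall x, J x -> f x <> 0.
Proof.
  intros [x0 [Hx0 Hf0]] z Hz Hfz. apply Hf0.
  destruct (Req_dec x0 z) as [<-|Hne]; auto.
  pose proof (mean_equation_balance J f phi t z x0 feq Hz Hx0) as E. rewrite Hfz in E.
  assert (Hm : phi x0 - phi (t * z + (1 - t) * x0) <> 0).
  { apply Rminus_eq_contra, (strictly_monotone_inj J); auto using mean_in. intro. apply Hne. nra. }
  assert (Z : (1 - t) * f x0 * (phi x0 - phi (t * z + (1 - t) * x0)) = 0) by lra.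
  apply Rmult_integral in Z as [Z|Z]; [nra | contradiction].
Qed.

(* The increments phi m - phi x and phi y - phi m have the same sign, hence so have the two
   sides of the balance equation. *)
Lemma solution_f_same_sign :
  (forall x, J x -> f x <> 0) -> forall x y, J x -> J y -> 0 < f x * f y.
Proof.
  intros Hn.
  assert (K : forall x y, J x -> J y -> x < y -> 0 < f x * f y).
  { intros x y Hx Hy Hxy. pose proof (mean_equation_balance J f phi t x y feq Hx Hy) as E.
    set (m := t * x + (1 - t) * y) in *.
    pose proof (mean_in x y Hx Hy) as Hm. fold m in Hm.
    assert (x < m < y) by (unfold m; split; nra).
    assert (Hs : 0 < (phi m - phi x) * (phi y - phi m)).
    { destruct phi_mono as [Hi|Hi];
        pose proof (Hi x m Hx Hm ltac:(lra)); pose proof (Hi m y Hm Hy ltac:(lra)); cbv beta in *.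
      - apply Rmult_lt_0_compat; lra.
      - replace (_ * _) with ((phi x - phi m) * (phi m - phi y)) by ring.
        apply Rmult_lt_0_compat; lra. }
    assert (Hy0 : 0 < f y * f y) by (apply Rsqr_pos_lt; auto).
    assert (Q : t * (f x * f y) * ((phi m - phi x) * (phi m - phi x))
                = (1 - t) * (f y * f y) * ((phi m - phi x) * (phi y - phi m))).
    { transitivity (f y * (phi m - phi x) * (t * f x * (phi m - phi x))); [ring|].
      rewrite E. ring. }
    assert (0 < (phi m - phi x) * (phi m - phi x)).
    { apply Rsqr_pos_lt. intro Z. rewrite Z in Hs. lra. }
    assert (0 < (1 - t) * (f y * f y) * ((phi m - phi x) * (phi y - phi m)))
      by (apply Rmult_lt_0_compat; [apply Rmult_lt_0_compat|]; lra).
    destruct (Rle_dec (f x * f y) 0); [|lra].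
    assert (t * (f x * f y) * ((phi m - phi x) * (phi m - phi x)) <= 0)
      by (apply Rmult_le_0_r; [apply Rmult_le_0_l|]; lra).
    lra. }
  intros x y Hx Hy. destruct (Rtotal_order x y) as [l|[e|g]].
  - now apply K.
  - subst. apply Rsqr_pos_lt; auto.
  - rewrite Rmult_comm. now apply K.
Qed.

End General_solution.

(** * Continuity of phi *)

Record normalized (J : R -> Prop) (f phi : R -> R) (t : R) : Prop := {
  nz_open : open J;
  nz_conn : is_connected J;
  nz_t : 0 < t < 1;
  nz_eq : mean_equation J f phi t;
  nz_pos : forall x, J x -> 0 < f x;
  nz_incr : strictly_increasing J phi }.

Section Normalized_continuity.

Variables (J : R -> Prop) (f phi : R -> R) (t : R).
Hypothesis H : normalized J f phi t.

Let t_range := nz_t _ _ _ _ H.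
Let feq := nz_eq _ _ _ _ H.
Let f_pos := nz_pos _ _ _ _ H.
Let phi_lt := nz_incr _ _ _ _ H.

Lemma nz_le (x y : R) : J x -> J y -> x <= y -> phi x <= phi y.
Proof. intros Hx Hy [Hl|<-]; [left; now apply phi_lt | lra]. Qed.

Lemma nz_mean_in (x y : R) : J x -> J y -> J (t * x + (1 - t) * y).
Proof. intros Hx Hy. apply is_connected_comb; auto. apply (nz_conn _ _ _ _ H). lra. Qed.

Section Window.

Variables (z e : R).
Hypotheses (e_pos : 0 < e) (ball_in : forall w, Rabs (w - z) < e -> J w).

Lemma window_in (w d : R) : Rabs (w - z) < d -> d <= e -> J w.
Proof. intros Hw Hd. apply ball_in. lra. Qed.

(* Compare f w with f c at the point c = z + e/2 on its right, via the balance equation. *)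
Lemma nz_f_lower_bound (r : R) : 0 < r < e / 2 ->
  exists beta, 0 < beta /\ forall w, Rabs (w - z) < r -> beta <= f w.
Proof.
  intros Hr. set (c := z + e / 2).
  assert (Jc : J c) by (apply (window_in _ e); [unfold c; rewrite Rabs_right|]; lra).
  assert (Jl : J (z - r)) by (apply (window_in _ e); [rewrite Rabs_left|]; lra).
  set (mr := t * (z + r) + (1 - t) * c).
  assert (Jmr : J mr)
    by (apply nz_mean_in; auto; apply (window_in _ e); [rewrite Rabs_right|]; lra).
  assert (d2 : 0 < phi c - phi mr) by (apply Rlt_0_minus, phi_lt; auto; unfold mr, c; nra).
  assert (d3 : 0 < phi c - phi (z - r)) by (apply Rlt_0_minus, phi_lt; auto; unfold c; lra).
  pose proof (f_pos c Jc).
  exists ((1 - t) * f c * (phi c - phi mr) / (t * (phi c - phi (z - r)))). split.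
  { apply Rdiv_lt_0_compat; repeat apply Rmult_lt_0_compat; lra. }
  intros w Hw. apply Rabs_def2 in Hw.
  assert (Jw : J w) by (apply (window_in _ e); [apply Rabs_def1|]; lra).
  pose proof (f_pos w Jw).
  set (m := t * w + (1 - t) * c).
  assert (Jm : J m) by (apply nz_mean_in; auto).
  pose proof (mean_equation_balance J f phi t w c feq Jw Jc) as E. fold m in E.
  assert (phi m <= phi mr) by (apply nz_le; auto; unfold m, mr; nra).
  assert (phi m <= phi c) by (apply nz_le; auto; unfold m, c; nra).
  assert (phi (z - r) <= phi w) by (apply nz_le; auto; lra).
  assert (Hle : (1 - t) * f c * (phi c - phi mr) <= t * f w * (phi c - phi (z - r))).
  { apply Rle_trans with ((1 - t) * f c * (phi c - phi m)); [apply Rmult_le_compat_l; nra|].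
    rewrite <- E. apply Rmult_le_compat_l; nra. }
  apply Rmult_le_reg_r with (t * (phi c - phi (z - r))); [nra|].
  unfold Rdiv. rewrite Rmult_assoc, Rinv_l by nra. nra.
Qed.

(* Symmetrically with the point a = z - e/2 on the left; here r must be small enough that
   the mean of a and z + r still lies left of z - r. *)
Lemma nz_f_upper_bound (r : R) : 0 < r <= t * e / 8 ->
  exists B, forall w, Rabs (w - z) < r -> f w <= B.
Proof.
  intros Hr. set (a := z - e / 2).
  assert (Ja : J a) by (apply (window_in _ e); [unfold a; rewrite Rabs_left|]; lra).
  assert (Jl : J (z - r)) by (apply (window_in _ e); [rewrite Rabs_left|]; nra).
  set (mr := t * a + (1 - t) * (z + r)).
  assert (Jmr : J mr)
    by (apply nz_mean_in; auto; apply (window_in _ e); [rewrite Rabs_right|]; nra).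
  assert (d1 : 0 < phi (z - r) - phi mr) by (apply Rlt_0_minus, phi_lt; auto; unfold mr, a; nra).
  pose proof (f_pos a Ja).
  exists (t * f a * (phi mr - phi a) / ((1 - t) * (phi (z - r) - phi mr))).
  intros w Hw. apply Rabs_def2 in Hw.
  assert (Jw : J w) by (apply (window_in _ e); [apply Rabs_def1|]; nra).
  pose proof (f_pos w Jw).
  set (m := t * a + (1 - t) * w).
  assert (Jm : J m) by (apply nz_mean_in; auto).
  pose proof (mean_equation_balance J f phi t a w feq Ja Jw) as E. fold m in E.
  assert (phi m <= phi mr) by (apply nz_le; auto; unfold m, mr; nra).
  assert (phi (z - r) <= phi w) by (apply nz_le; auto; lra).
  assert (Hle : (1 - t) * f w * (phi (z - r) - phi mr) <= t * f a * (phi mr - phi a)).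
  { apply Rle_trans with ((1 - t) * f w * (phi w - phi m)); [apply Rmult_le_compat_l; nra|].
    rewrite <- E. apply Rmult_le_compat_l; nra. }
  apply Rmult_le_reg_r with ((1 - t) * (phi (z - r) - phi mr)); [nra|].
  unfold Rdiv. rewrite Rmult_assoc, Rinv_l by nra. nra.
Qed.

End Window.

Lemma nz_f_local_bounds (z : R) : J z ->
  exists r beta B, 0 < r /\ 0 < beta /\
    forall w, Rabs (w - z) < r -> J w /\ beta <= f w /\ f w <= B.
Proof.
  intros Hz. destruct (open_Rabs J z (nz_open _ _ _ _ H) Hz) as [[e He] Hball]. simpl in Hball.
  set (r := t * e / 8).
  assert (Hr : 0 < r <= t * e / 8) by (unfold r; split; nra).
  destruct (nz_f_lower_bound z e He Hball r ltac:(split; nra)) as [beta [Hb Hlow]].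
  destruct (nz_f_upper_bound z e He Hball r Hr) as [B Hup].
  exists r, beta, B. split; [lra|]. split; [exact Hb|].
  intros w Hw. split; [apply Hball; nra | auto].
Qed.

Lemma nz_increment_bound (x y beta B : R) :
  0 < beta -> J x -> J y -> x < y -> f x <= B -> beta <= f y ->
  phi y - phi (t * x + (1 - t) * y)
  <= t * B / ((1 - t) * beta) * (phi (t * x + (1 - t) * y) - phi x).
Proof.
  intros Hb Hx Hy Hxy HB Hbeta.
  pose proof (mean_equation_balance J f phi t x y feq Hx Hy) as E.
  set (m := t * x + (1 - t) * y) in *.
  assert (Jm : J m) by (apply nz_mean_in; auto).
  assert (x < m < y) by (unfold m; split; nra).
  pose proof (phi_lt x m Hx Jm ltac:(lra)). pose proof (phi_lt m y Jm Hy ltac:(lra)).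
  pose proof (f_pos x Hx).
  apply Rmult_le_reg_l with ((1 - t) * beta); [nra|].
  replace ((1 - t) * beta * (t * B / ((1 - t) * beta) * (phi m - phi x)))
    with (t * B * (phi m - phi x)) by (field; lra).
  apply Rle_trans with ((1 - t) * f y * (phi y - phi m)); [apply Rmult_le_compat_r; nra|].
  rewrite <- E. apply Rmult_le_compat_r; nra.
Qed.

Lemma nz_phi_left_oscillation (z r : R) : 0 < r -> (forall w, Rabs (w - z) < r -> J w) ->
  forall delta, 0 < delta ->
  exists x1, z - r < x1 < z /\ forall w, x1 <= w < z -> phi w - phi x1 < delta.
Proof.
  intros Hr Hball delta Hdelta.
  assert (Jl : forall x, z - r < x <= z -> J x) by (intros x Hx; apply Hball, Rabs_def1; lra).
  set (S := fun v => exists x, z - r < x < z /\ v = phi x).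
  assert (Sb : bound S).
  { exists (phi z). intros v [x [Hx ->]]. apply nz_le; auto; [apply Jl|apply Jl|]; lra. }
  assert (Sne : exists v, S v) by (exists (phi (z - r / 2)), (z - r / 2); split; [lra | auto]).
  destruct (completeness S Sb Sne) as [L [HL1 HL2]].
  assert (Hx1 : exists x1, z - r < x1 < z /\ L - delta < phi x1).
  { apply Classical_Prop.NNPP. intros Hn.
    assert (L <= L - delta); [|lra].
    apply HL2. intros v [x [Hx ->]]. apply Rnot_lt_le. intro. apply Hn. now exists x. }
  destruct Hx1 as [x1 [Hx1 Hphx1]]. exists x1. split; auto. intros w Hw.
  assert (phi w <= L) by (apply HL1; exists w; split; [lra | auto]). lra.
Qed.

(* Take x1 left of z where phi oscillates by less than eps / K up to z, then x in [x1, z[ and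
   y > z whose mean m lies in [x, z[: the increment bound gives phi y - phi m < eps. *)
Lemma nz_phi_right_continuous (z : R) : J z ->
  forall eps, 0 < eps -> exists d, 0 < d /\ forall w, z <= w < z + d -> phi w - phi z < eps.
Proof.
  intros Hz eps Heps.
  destruct (nz_f_local_bounds z Hz) as [r [beta [B [Hr [Hb HB]]]]].
  assert (Bb : beta <= B) by (destruct (HB z ltac:(rewrite Rminus_diag, Rabs_R0; lra)); lra).
  set (K := t * B / ((1 - t) * beta)).
  assert (Kpos : 0 < K) by (unfold K; apply Rdiv_lt_0_compat; nra).
  destruct (nz_phi_left_oscillation z r Hr (fun w Hw => proj1 (HB w Hw)) (eps / K)
              ltac:(apply Rdiv_lt_0_compat; auto)) as [x1 [Hx1 Hosc]].
  set (u := Rmin (z - x1) (r * (1 - t))).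
  assert (upos : 0 < u) by (unfold u; apply Rmin_case; nra).
  assert (u1 : u <= z - x1) by apply Rmin_l.
  assert (u2 : u <= r * (1 - t)) by apply Rmin_r.
  set (d := t * u / (2 * (1 - t))).
  assert (dpos : 0 < d) by (apply Rdiv_lt_0_compat; nra).
  assert (dr : d <= t * r / 2).
  { apply Rmult_le_reg_r with (2 * (1 - t)); [nra|].
    unfold d, Rdiv. rewrite Rmult_assoc, Rinv_l by nra. nra. }
  set (x := z - u). set (y := z + d). set (m := z - t * u / 2).
  destruct (HB x ltac:(unfold x; rewrite Rabs_left; lra)) as [Jx [_ fx]].
  destruct (HB y ltac:(unfold y; rewrite Rabs_right; nra)) as [Jy [fy _]].
  assert (Hm : t * x + (1 - t) * y = m) by (unfold x, y, d, m; field; lra).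
  pose proof (nz_increment_bound x y beta B Hb Jx Jy ltac:(unfold x, y; lra) fx fy) as Hinc.
  fold K in Hinc. rewrite Hm in Hinc.
  assert (Jm : J m) by (rewrite <- Hm; apply nz_mean_in; auto).
  assert (phi m - phi x1 < eps / K) by (apply Hosc; unfold m; nra).
  assert (phi x1 <= phi x) by (apply nz_le; auto; [apply HB; rewrite Rabs_left|unfold x]; lra).
  assert (phi m <= phi z) by (apply nz_le; auto; unfold m; nra).
  assert (K * (phi m - phi x) < eps).
  { replace eps with (K * (eps / K)) by (field; lra). apply Rmult_lt_compat_l; lra. }
  exists d. split; auto. intros w Hw.
  assert (Jw : J w) by (apply HB; rewrite Rabs_right; nra).
  assert (phi w <= phi y) by (apply nz_le; auto; unfold y; lra).
  lra.
Qed.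

End Normalized_continuity.

Lemma normalized_reflect (J : R -> Prop) (f phi : R -> R) (t : R) :
  normalized J f phi t ->
  normalized (fun x => J (- x)) (fun x => f (- x)) (fun x => - phi (- x)) (1 - t).
Proof.
  intros [Ho Hc Ht Hfe Hp Hi]. split.
  - apply (open_comp_aff J (-1) 0) in Ho. revert Ho. apply open_ext. intros x.
    now replace (-1 * x + 0) with (- x) by ring.
  - intros x y z Hx Hy Hz. apply (Hc (- y) (- x)); auto; lra.
  - lra.
  - intros x y Hx Hy. specialize (Hfe (- y) (- x) Hy Hx).
    replace (- ((1 - t) * x + (1 - (1 - t)) * y)) with (t * - y + (1 - t) * - x) by ring.
    lra.
  - intros x Hx; auto.
  - intros x y Hx Hy Hxy. specialize (Hi (- y) (- x) Hy Hx ltac:(lra)). lra.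
Qed.

Lemma nz_phi_continuous (J : R -> Prop) (f phi : R -> R) (t : R) :
  normalized J f phi t -> cont_on J phi.
Proof.
  intros H z Hz. apply continuity_pt_filterlim.
  intros eps Heps. simpl. unfold R_dist.
  destruct (nz_phi_right_continuous J f phi t H z Hz eps Heps) as [d1 [d1p H1]].
  destruct (nz_phi_right_continuous _ _ _ _ (normalized_reflect J f phi t H) (- z)
              ltac:(cbv beta; now rewrite Ropp_involutive) eps Heps) as [d2 [d2p H2]].
  destruct (open_Rabs J z (nz_open _ _ _ _ H) Hz) as [[e epos] He]. simpl in He.
  exists (Rmin e (Rmin d1 d2)). split; [repeat apply Rmin_case; lra|].
  intros w [_ Hw]. simpl in Hw. unfold R_dist in Hw.
  pose proof (Rmin_l e (Rmin d1 d2)). pose proof (Rmin_r e (Rmin d1 d2)).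
  pose proof (Rmin_l d1 d2). pose proof (Rmin_r d1 d2).
  assert (Jw : J w) by (apply He; lra).
  apply Rabs_def2 in Hw. destruct (Rle_dec z w).
  - specialize (H1 w ltac:(lra)).
    assert (phi z <= phi w) by (apply (nz_le J f phi t H); auto).
    rewrite Rabs_right; lra.
  - specialize (H2 (- w) ltac:(lra)). cbv beta in H2. rewrite !Ropp_involutive in H2.
    assert (phi w <= phi z) by (apply (nz_le J f phi t H); auto; lra).
    rewrite Rabs_left1; lra.
Qed.

(** * Twice differentiability *)

(* Solving the balance equation at (x0, w) for f w expresses f through phi alone. *)
Lemma solution_f_regular (K : (R -> Prop) -> (R -> R) -> Prop)
    (J : R -> Prop) (f phi : R -> R) (t : R) :
  regularity K -> open J -> is_connected J -> 0 < t < 1 ->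
  mean_equation J f phi t -> strictly_monotone J phi -> K J phi -> K J f.
Proof.
  intros HK Ho Hc Ht Hfe Hm Hphi. apply (reg_local _ HK). intros y Hy.
  destruct (open_Rabs J y Ho Hy) as [[e ep] He]. simpl in He.
  set (x0 := y - e / 2). set (V := fun w => Rabs (w - y) < e / 2).
  assert (Jx0 : J x0) by (apply He; unfold x0; rewrite Rabs_left; lra).
  assert (VJ : forall w, V w -> J w) by (intros w Hw; apply He; unfold V in Hw; lra).
  assert (Vx0 : forall w, V w -> x0 < w) by (intros w Hw; apply Rabs_def2 in Hw; unfold x0; lra).
  assert (Vm : forall w, V w -> J ((1 - t) * w + t * x0)).
  { intros w Hw. replace ((1 - t) * w + t * x0) with (t * x0 + (1 - t) * w) by ring.
    apply is_connected_comb; auto; lra. }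
  assert (Vd : forall w, V w -> phi w - phi ((1 - t) * w + t * x0) <> 0).
  { intros w Hw. pose proof (Vx0 w Hw). apply Rminus_eq_contra, (strictly_monotone_inj J); auto.
    nra. }
  exists V. split; [apply open_Rabs_lt|]. split; [unfold V; rewrite Rminus_diag, Rabs_R0; lra|].
  apply (reg_ext _ HK V (fun w => t * f x0 * (phi ((1 - t) * w + t * x0) - phi x0)
                                  / ((1 - t) * (phi w - phi ((1 - t) * w + t * x0))))).
  { apply open_Rabs_lt. }
  { intros w Hw. pose proof (mean_equation_balance J f phi t x0 w Hfe Jx0 (VJ w Hw)) as E.
    replace ((1 - t) * w + t * x0) with (t * x0 + (1 - t) * w) in * by ring.
    rewrite E. field. replace (t * x0 + (1 - t) * w) with ((1 - t) * w + t * x0) by ring.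
    split; [apply Vd, Hw | lra]. }
  pose proof (open_Rabs_lt y (e / 2)) as HV. fold V in HV.
  assert (Hphi_V : K V phi) by (apply (reg_sub _ HK J); auto).
  assert (Hmid : K V (fun w => phi ((1 - t) * w + t * x0))) by (apply (reg_comp_aff _ HK J); auto).
  apply (reg_div _ HK); auto.
  - apply (reg_mult _ HK); auto; [apply (reg_const _ HK); auto|].
    apply (reg_minus _ HK); auto. apply (reg_const _ HK); auto.
  - apply (reg_mult _ HK); auto; [apply (reg_const _ HK); auto|].
    apply (reg_minus _ HK); auto.
  - intros w Hw. apply Rmult_integral_contrapositive. split; [lra | apply Vd, Hw].
Qed.

(* The pairs (- (1 - t) s + m, t s + m) all have t-mean m, so integrating the equation over
   them gives phi m * chord_int f = chord_int (f phi), and chord_int h is one degree smoother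
   than h. *)
Definition chord_int (h : R -> R) (t d m : R) : R :=
  RInt (fun s => t * h (- (1 - t) * s + m) + (1 - t) * h (t * s + m)) 0 d.

Definition chord_int_deriv (h : R -> R) (t d m : R) : R :=
  t / (1 - t) * (h m - h (- (1 - t) * d + m)) + (1 - t) / t * (h (t * d + m) - h m).

Section Chord_integral.

Variables (h : R -> R) (t m0 e : R).
Hypotheses (t_range : 0 < t < 1) (e_pos : 0 < e)
  (h_cont : forall w, Rabs (w - m0) < e -> continuous h w).

Lemma chord_point_in_ball (u m s : R) :
  Rabs u <= 1 -> Rabs (m - m0) < e / 2 -> 0 <= s <= e / 2 -> Rabs (u * s + m - m0) < e.
Proof.
  intros Hu Hm Hs. replace (u * s + m - m0) with (u * s + (m - m0)) by ring.
  eapply Rle_lt_trans; [apply Rabs_triang|]. rewrite Rabs_mult, (Rabs_pos_eq s) by lra.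
  assert (Rabs u * s <= s) by (pose proof (Rabs_pos u); nra). lra.
Qed.

Lemma ex_RInt_chord (u m : R) :
  Rabs u <= 1 -> Rabs (m - m0) < e / 2 -> ex_RInt (fun s => h (u * s + m)) 0 (e / 2).
Proof.
  intros Hu Hm. apply (@ex_RInt_continuous R_CompleteNormedModule).
  rewrite Rmin_left, Rmax_right by lra. intros s Hs.
  apply (continuous_comp (fun s => u * s + m) h).
  - apply (ex_derive_continuous (fun s => u * s + m)). auto_derive; auto.
  - apply h_cont. now apply chord_point_in_ball.
Qed.

Lemma ex_RInt_from_center (c : R) : Rabs (c - m0) < e -> ex_RInt h m0 c.
Proof.
  intros Hc. apply (@ex_RInt_continuous R_CompleteNormedModule). intros z Hz. apply h_cont.
  apply Rabs_def2 in Hc. revert Hz. apply Rmin_case_strong; apply Rmax_case_strong;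
    intros; apply Rabs_def1; lra.
Qed.

Let A (u : R) : R := RInt h m0 u.

Lemma is_derive_RInt_ball (u : R) : Rabs (u - m0) < e -> is_derive A u (h u).
Proof.
  intros Hu. apply (is_derive_RInt h A m0 u).
  - apply (locally_open (fun w => Rabs (w - m0) < e)); auto using open_Rabs_lt.
    intros y Hy. now apply (@RInt_correct R_CompleteNormedModule), ex_RInt_from_center.
  - apply h_cont, Hu.
Qed.

Lemma RInt_ball (a b : R) : Rabs (a - m0) < e -> Rabs (b - m0) < e -> RInt h a b = A b - A a.
Proof.
  intros Ha Hb. unfold A.
  rewrite <- (@RInt_Chasles R_CompleteNormedModule h m0 a b).
  - unfold plus; simpl. symmetry. apply Rplus_minus_l.
  - now apply ex_RInt_from_center.
  - apply (@ex_RInt_Chasles R_CompleteNormedModule h a m0 b);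
      [apply ex_RInt_swap|]; now apply ex_RInt_from_center.
Qed.

Lemma RInt_chord (u m : R) : Rabs u <= 1 -> Rabs (m - m0) < e / 2 ->
  u * RInt (fun s => h (u * s + m)) 0 (e / 2) = A (u * (e / 2) + m) - A m.
Proof.
  intros Hu Hm.
  assert (Hb : Rabs (u * (e / 2) + m - m0) < e) by (apply chord_point_in_ball; auto; lra).
  assert (Hex : ex_RInt h (u * 0 + m) (u * (e / 2) + m)).
  { replace (u * 0 + m) with m by ring.
    apply (@ex_RInt_Chasles R_CompleteNormedModule h m m0); [apply ex_RInt_swap|];
      apply ex_RInt_from_center; auto; lra. }
  pose proof (@RInt_comp_lin R_CompleteNormedModule h u m 0 (e / 2) Hex) as E.
  replace (u * 0 + m) with m in E by ring.
  rewrite <- (RInt_ball m), <- E; [| lra | exact Hb].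
  symmetry. apply (@RInt_scal R_CompleteNormedModule (fun s => h (u * s + m))).
  now apply ex_RInt_chord.
Qed.

Lemma chord_int_eq (m : R) : Rabs (m - m0) < e / 2 ->
  chord_int h t (e / 2) m
  = t / (1 - t) * (A m - A (- (1 - t) * (e / 2) + m)) + (1 - t) / t * (A (t * (e / 2) + m) - A m).
Proof.
  intros Hm.
  assert (Hl : Rabs (- (1 - t)) <= 1) by (rewrite Rabs_Ropp, Rabs_pos_eq; lra).
  assert (Hr : Rabs t <= 1) by (rewrite Rabs_pos_eq; lra).
  set (I1 := RInt (fun s => h (- (1 - t) * s + m)) 0 (e / 2)).
  set (I2 := RInt (fun s => h (t * s + m)) 0 (e / 2)).
  assert (E : chord_int h t (e / 2) m = plus (scal t I1) (scal (1 - t) I2)).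
  { unfold chord_int, I1, I2.
    rewrite <- !(@RInt_scal R_CompleteNormedModule) by now apply ex_RInt_chord.
    rewrite <- (@RInt_plus R_CompleteNormedModule); [reflexivity | |];
      apply (@ex_RInt_scal R_CompleteNormedModule); now apply ex_RInt_chord. }
  rewrite E. unfold plus, scal; simpl; unfold mult; simpl.
  pose proof (RInt_chord (- (1 - t)) m Hl Hm) as E1. pose proof (RInt_chord t m Hr Hm) as E2.
  fold I1 in E1. fold I2 in E2.
  assert (Ht1 : I1 = (A m - A (- (1 - t) * (e / 2) + m)) / (1 - t))
    by (apply (Rmult_eq_reg_l (- (1 - t))); [rewrite E1; field | ]; lra).
  assert (Ht2 : I2 = (A (t * (e / 2) + m) - A m) / t)
    by (apply (Rmult_eq_reg_l t); [rewrite E2; field | ]; lra).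
  rewrite Ht1, Ht2. field. lra.
Qed.

Lemma is_derive_chord_int (m : R) : Rabs (m - m0) < e / 2 ->
  is_derive (chord_int h t (e / 2)) m (chord_int_deriv h t (e / 2) m).
Proof.
  intros Hm.
  apply (is_derive_ext_loc (fun m => t / (1 - t) * (A m - A (- (1 - t) * (e / 2) + m))
                                     + (1 - t) / t * (A (t * (e / 2) + m) - A m))).
  { apply (locally_open (fun w => Rabs (w - m0) < e / 2)); auto using open_Rabs_lt.
    intros y Hy. symmetry. now apply chord_int_eq. }
  pose proof Hm as Hm'. apply Rabs_def2 in Hm'.
  pose proof (is_derive_RInt_ball m ltac:(apply Rabs_def1; lra)) as D1.
  pose proof (is_derive_RInt_ball (- (1 - t) * (e / 2) + m) ltac:(apply Rabs_def1; nra)) as D2.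
  pose proof (is_derive_RInt_ball (t * (e / 2) + m) ltac:(apply Rabs_def1; nra)) as D3.
  auto_derive.
  - repeat split; eexists; eauto.
  - fold_Derive. rewrite (is_derive_unique _ _ _ D1), (is_derive_unique _ _ _ D2),
      (is_derive_unique _ _ _ D3). unfold chord_int_deriv. field. lra.
Qed.

End Chord_integral.

Lemma chord_int_deriv_regular (K : (R -> Prop) -> (R -> R) -> Prop) (U : R -> Prop)
    (h : R -> R) (t m0 e : R) :
  regularity K -> 0 < t < 1 -> 0 < e -> (forall w, Rabs (w - m0) < e -> U w) -> K U h ->
  K (fun m => Rabs (m - m0) < e / 2) (chord_int_deriv h t (e / 2)).
Proof.
  intros HK Ht He HU Hh. pose proof (open_Rabs_lt m0 (e / 2)) as HV.
  assert (Hin : forall c, Rabs c <= e / 2 -> forall y, Rabs (y - m0) < e / 2 -> U (c + y)).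
  { intros c Hc y Hy. apply HU. replace (c + y - m0) with (c + (y - m0)) by ring.
    eapply Rle_lt_trans; [apply Rabs_triang|]. lra. }
  assert (Hsub : K (fun m => Rabs (m - m0) < e / 2) h)
    by (apply (reg_sub _ HK U); auto; intros y Hy; apply HU; lra).
  unfold chord_int_deriv.
  apply (reg_plus _ HK); auto; apply (reg_mult _ HK); auto; try (apply (reg_const _ HK); auto);
    apply (reg_minus _ HK); auto; apply (reg_shift _ U); auto; apply Hin.
  - replace (- (1 - t) * (e / 2)) with (- ((1 - t) * (e / 2))) by ring.
    rewrite Rabs_Ropp, Rabs_pos_eq; nra.
  - rewrite Rabs_pos_eq; nra.
Qed.

Lemma chord_int_diff (h : R -> R) (t m0 e : R) :
  0 < t < 1 -> 0 < e -> cont_on (fun w => Rabs (w - m0) < e) h ->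
  diff_on (fun m => Rabs (m - m0) < e / 2) (chord_int h t (e / 2)).
Proof. intros Ht He Hh m Hm. eexists. now apply (is_derive_chord_int h t m0 e). Qed.

Lemma chord_int_diff2 (h : R -> R) (t m0 e : R) :
  0 < t < 1 -> 0 < e -> diff_on (fun w => Rabs (w - m0) < e) h ->
  diff2_on (fun m => Rabs (m - m0) < e / 2) (chord_int h t (e / 2)).
Proof.
  intros Ht He Hh. apply (diff2_on_derive _ _ (chord_int_deriv h t (e / 2))).
  - apply open_Rabs_lt.
  - intros m Hm. apply (is_derive_chord_int h t m0 e); auto.
    intros w Hw. apply (ex_derive_continuous h), Hh, Hw.
  - apply (chord_int_deriv_regular _ (fun w => Rabs (w - m0) < e)); auto using regularity_diff.
Qed.

Section Normalized_smoothness.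

Variables (J : R -> Prop) (f phi : R -> R) (t : R).
Hypothesis H : normalized J f phi t.

Let t_range := nz_t _ _ _ _ H.
Let J_open := nz_open _ _ _ _ H.

Lemma nz_chord_quotient (m0 e m : R) :
  0 < e -> (forall w, Rabs (w - m0) < e -> J w) -> cont_on J f -> Rabs (m - m0) < e / 2 ->
  phi m * chord_int f t (e / 2) m = chord_int (fun x => f x * phi x) t (e / 2) m
  /\ 0 < chord_int f t (e / 2) m.
Proof.
  intros He Hball Hf Hm.
  set (V := fun s => J (- (1 - t) * s + m) /\ J (t * s + m)).
  assert (HV : open V) by (apply open_and; apply open_comp_aff, J_open).
  assert (Hseg : forall s, 0 <= s <= e / 2 -> V s).
  { intros s Hs. split; apply Hball, chord_point_in_ball; auto;
      [rewrite Rabs_Ropp|]; rewrite Rabs_pos_eq; lra. }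
  set (F := fun s => t * f (- (1 - t) * s + m) + (1 - t) * f (t * s + m)).
  assert (FC : cont_on V F).
  { pose proof regularity_cont as C. unfold F.
    apply (reg_plus _ C); auto; apply (reg_mult _ C); auto; try (apply (reg_const _ C); auto);
      apply (reg_comp_aff _ C J); auto; intros y [Hy1 Hy2]; auto. }
  assert (FC' : forall s, Rmin 0 (e / 2) <= s <= Rmax 0 (e / 2) -> continuous F s)
    by (rewrite Rmin_left, Rmax_right by lra; intros s Hs; apply FC, Hseg, Hs).
  split.
  - unfold chord_int. fold F.
    transitivity (scal (phi m) (RInt F 0 (e / 2))); [reflexivity|].
    rewrite <- (@RInt_scal R_CompleteNormedModule F 0 (e / 2))
      by now apply (@ex_RInt_continuous R_CompleteNormedModule).
    apply RInt_ext. rewrite Rmin_left, Rmax_right by lra. intros s Hs.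
    destruct (Hseg s ltac:(lra)) as [J1 J2].
    pose proof (nz_eq _ _ _ _ H _ _ J1 J2) as E.
    replace (t * (- (1 - t) * s + m) + (1 - t) * (t * s + m)) with m in E by ring.
    unfold F, scal; simpl; unfold mult; simpl. lra.
  - apply RInt_gt_0; [lra | | intros s Hs; apply FC, Hseg, Hs].
    intros s Hs. destruct (Hseg s ltac:(lra)) as [J1 J2]. unfold F.
    pose proof (nz_pos _ _ _ _ H _ J1). pose proof (nz_pos _ _ _ _ H _ J2). nra.
Qed.

Lemma nz_phi_lift (K L : (R -> Prop) -> (R -> R) -> Prop) :
  regularity K -> regularity L ->
  (forall h m0 e, 0 < e -> L (fun w => Rabs (w - m0) < e) h ->
     K (fun m => Rabs (m - m0) < e / 2) (chord_int h t (e / 2))) ->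
  cont_on J f -> L J f -> L J phi -> K J phi.
Proof.
  intros HK HL Hint Hf Lf Lphi. apply (reg_local _ HK). intros m0 Hm0.
  destruct (open_Rabs J m0 J_open Hm0) as [[e ep] He]. simpl in He.
  set (V := fun m => Rabs (m - m0) < e / 2).
  assert (HV : open V) by apply open_Rabs_lt.
  assert (Lsub : forall u, L J u -> L (fun w => Rabs (w - m0) < e) u)
    by (intros u Hu; apply (reg_sub _ HL J); auto).
  exists V. split; auto. split; [unfold V; rewrite Rminus_diag, Rabs_R0; lra|].
  apply (reg_ext _ HK V (fun m => chord_int (fun x => f x * phi x) t (e / 2) m
                                  / chord_int f t (e / 2) m)); auto.
  - intros m Hm. destruct (nz_chord_quotient m0 e m ep He Hf Hm) as [E P].
    rewrite <- E. field. lra.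
  - apply (reg_div _ HK); auto; try apply Hint; auto.
    + apply Lsub, (reg_mult _ HL); auto.
    + intros m Hm. destruct (nz_chord_quotient m0 e m ep He Hf Hm) as [_ P]. lra.
Qed.

Lemma nz_diff2 : diff2_on J f /\ diff2_on J phi.
Proof.
  assert (Hmono : strictly_monotone J phi) by (left; apply (nz_incr _ _ _ _ H)).
  pose proof (nz_conn _ _ _ _ H) as Hc. pose proof (nz_eq _ _ _ _ H) as Hfe.
  assert (P0 : cont_on J phi) by now apply (nz_phi_continuous J f phi t).
  assert (F0 : cont_on J f) by (apply (solution_f_regular _ J f phi t regularity_cont); auto).
  assert (P1 : diff_on J phi).
  { apply (nz_phi_lift diff_on cont_on regularity_diff regularity_cont); auto.
    intros h m0 e He Hh. now apply chord_int_diff. }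
  assert (F1 : diff_on J f) by (apply (solution_f_regular _ J f phi t regularity_diff); auto).
  assert (P2 : diff2_on J phi).
  { apply (nz_phi_lift diff2_on diff_on regularity_diff2 regularity_diff); auto.
    intros h m0 e He Hh. now apply chord_int_diff2. }
  split; auto. apply (solution_f_regular _ J f phi t regularity_diff2); auto.
Qed.

End Normalized_smoothness.

Lemma mean_equation_scal (J : R -> Prop) (f phi : R -> R) (t c1 c2 : R) :
  mean_equation J f phi t -> mean_equation J (fun x => c1 * f x) (fun x => c2 * phi x) t.
Proof.
  intros H x y Hx Hy. specialize (H x y Hx Hy).
  transitivity (c1 * c2 * ((t * f x + (1 - t) * f y) * phi (t * x + (1 - t) * y))); [ring|].
  rewrite H. ring.
Qed.

Lemma solution_normalize (J : R -> Prop) (f phi : R -> R) (t : R) :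
  open J -> is_connected J -> 0 < t < 1 -> mean_equation J f phi t ->
  strictly_monotone J phi -> (exists x0, J x0 /\ f x0 <> 0) ->
  exists c1 c2, c1 <> 0 /\ c2 <> 0 /\
    normalized J (fun x => c1 * f x) (fun x => c2 * phi x) t.
Proof.
  intros Ho Hc Ht Hfe Hm Hx0.
  pose proof (solution_f_neq0 J f phi t Hc Ht Hfe Hm Hx0) as Hn.
  pose proof (solution_f_same_sign J f phi t Hc Ht Hfe Hm Hn) as Hs.
  destruct Hx0 as [x0 [Jx0 _]].
  assert (Hf : exists c1, c1 <> 0 /\ forall x, J x -> 0 < c1 * f x).
  { destruct (Rlt_dec 0 (f x0)).
    - exists 1. split; [lra|]. intros x Hx. pose proof (Hs x0 x Jx0 Hx). nra.
    - exists (-1). split; [lra|]. intros x Hx. pose proof (Hs x0 x Jx0 Hx). pose proof (Hn x0 Jx0).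
      nra. }
  assert (Hp : exists c2, c2 <> 0 /\ strictly_increasing J (fun x => c2 * phi x)).
  { destruct Hm as [Hm|Hm]; [exists 1 | exists (-1)]; split; try lra;
      intros x y Hx Hy Hxy; specialize (Hm x y Hx Hy Hxy); simpl in Hm; lra. }
  destruct Hf as [c1 [Hc1 Hf]]. destruct Hp as [c2 [Hc2 Hp]].
  exists c1, c2. split; [exact Hc1|]. split; [exact Hc2|].
  split; auto. now apply mean_equation_scal.
Qed.

Lemma solution_diff2 (J : R -> Prop) (f phi : R -> R) (t : R) :
  open J -> is_connected J -> 0 < t < 1 -> mean_equation J f phi t ->
  strictly_monotone J phi -> (exists x0, J x0 /\ f x0 <> 0) ->
  diff2_on J f /\ diff2_on J phi.
Proof.
  intros Ho Hc Ht Hfe Hm Hx0.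
  destruct (solution_normalize J f phi t Ho Hc Ht Hfe Hm Hx0) as [c1 [c2 [Hc1 [Hc2 Hnz]]]].
  destruct (nz_diff2 _ _ _ _ Hnz) as [Hf Hp].
  split; [apply (reg_scal_inv _ J f c1) | apply (reg_scal_inv _ J phi c2)];
    auto using regularity_diff2.
Qed.

(** * Second-order consequences *)

Lemma Derive2_mult (U : R -> Prop) (u v : R -> R) (x : R) :
  open U -> diff2_on U u -> diff2_on U v -> U x ->
  Derive (Derive (fun z => u z * v z)) x
  = Derive (Derive u) x * v x + 2 * Derive u x * Derive v x + u x * Derive (Derive v) x.
Proof.
  intros HU Hu Hv Hx.
  rewrite (Derive_ext_open U _ (fun z => Derive u z * v z + u z * Derive v z)); auto.
  - destruct (Hu x Hx), (Hv x Hx). apply is_derive_unique. auto_derive; auto. fold_Derive. ring.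
  - intros z Hz. destruct (Hu z Hz), (Hv z Hz). now apply Derive_mult.
Qed.

Section Smooth_solution.

Variables (J : R -> Prop) (f phi : R -> R) (t : R).
Hypotheses (J_open : open J) (J_conn : is_connected J) (t_range : 0 < t < 1)
  (feq : mean_equation J f phi t) (f_diff2 : diff2_on J f) (phi_diff2 : diff2_on J phi).

Let g (x : R) : R := f x * phi x.

(* Differentiate twice in s the equation at the pair (- (1 - t) s + m, t s + m), whose mean
   stays m, and evaluate at s = y - x. *)
Lemma chord_second_identity (x y : R) : J x -> J y ->
  let m := t * x + (1 - t) * y in
  t * (1 - t) ^ 2 * (Derive (Derive g) x - phi m * Derive (Derive f) x)
  + (1 - t) * t ^ 2 * (Derive (Derive g) y - phi m * Derive (Derive f) y) = 0.
Proof.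
  intros Hx Hy m. assert (Hg : diff2_on J g) by (unfold g; now apply diff2_on_mult).
  set (S := fun s => J (- (1 - t) * s + m) /\ J (t * s + m)).
  assert (HS : open S) by (apply open_and; apply open_comp_aff, J_open).
  set (s0 := y - x).
  assert (X0 : - (1 - t) * s0 + m = x) by (unfold s0, m; ring).
  assert (Y0 : t * s0 + m = y) by (unfold s0, m; ring).
  assert (S0 : S s0) by (unfold S; rewrite X0, Y0; auto).
  set (E := fun s => t * g (- (1 - t) * s + m) + (1 - t) * g (t * s + m)
                     - phi m * (t * f (- (1 - t) * s + m) + (1 - t) * f (t * s + m))).
  assert (E0 : forall s, S s -> E s = 0).
  { intros s [S1 S2]. unfold E, g. pose proof (feq _ _ S1 S2) as Eq.
    replace (t * (- (1 - t) * s + m) + (1 - t) * (t * s + m)) with m in Eq by ring. lra. }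
  set (E1 := fun s =>
    t * (- (1 - t)) * Derive g (- (1 - t) * s + m) + (1 - t) * t * Derive g (t * s + m)
    - phi m * (t * (- (1 - t)) * Derive f (- (1 - t) * s + m)
               + (1 - t) * t * Derive f (t * s + m))).
  assert (D1 : forall s, S s -> is_derive E s (E1 s)).
  { intros s [S1 S2]. unfold E, E1.
    destruct (Hg _ S1), (Hg _ S2), (f_diff2 _ S1), (f_diff2 _ S2).
    auto_derive; [repeat split; auto|]. fold_Derive. ring. }
  assert (E10 : forall s, S s -> E1 s = 0)
    by (intros s Hs; apply (is_derive_zero_open S E s); auto).
  apply (is_derive_zero_open S E1 s0); auto.
  destruct S0 as [S1 S2]. unfold E1.
  destruct (Hg _ S1), (Hg _ S2), (f_diff2 _ S1), (f_diff2 _ S2).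
  auto_derive; [repeat split; auto|]. rewrite X0, Y0. fold_Derive. ring.
Qed.

Lemma solution_Derive2_mult (z : R) : J z -> Derive (Derive g) z = phi z * Derive (Derive f) z.
Proof.
  intros Hz. pose proof (chord_second_identity z z Hz Hz) as E. cbv zeta in E.
  replace (t * z + (1 - t) * z) with z in E by ring.
  assert (Z : t * (1 - t) * (Derive (Derive g) z - phi z * Derive (Derive f) z) = 0)
    by (rewrite <- E; ring).
  apply Rmult_integral in Z as [Z|Z]; [nra | lra].
Qed.

Lemma solution_phi_ode (z : R) : J z ->
  2 * Derive f z * Derive phi z + f z * Derive (Derive phi) z = 0.
Proof.
  intros Hz. pose proof (Derive2_mult J f phi z J_open f_diff2 phi_diff2 Hz) as E.
  fold g in E. rewrite solution_Derive2_mult in E by auto. lra.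
Qed.

Hypotheses (f_neq0 : forall x, J x -> f x <> 0) (phi_mono : strictly_monotone J phi).

Let q (z : R) : R := Derive (Derive f) z / f z.

(* With g'' = phi f'', the second identity and the balance equation (whose two sides are
   nonzero) combine into a relation between the ratios f''/f at x and y. *)
Lemma ratio_relation (x y : R) : J x -> J y -> x < y -> t ^ 2 * q y = (1 - t) ^ 2 * q x.
Proof.
  intros Hx Hy Hxy. pose proof (chord_second_identity x y Hx Hy) as E. cbv zeta in E.
  rewrite !solution_Derive2_mult in E by auto.
  pose proof (mean_equation_balance J f phi t x y feq Hx Hy) as B.
  set (m := t * x + (1 - t) * y) in *.
  assert (Jm : J m) by (apply is_connected_comb; auto; lra).
  assert (A0 : (1 - t) * f y * (phi y - phi m) <> 0).
  { assert (phi y - phi m <> 0).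
    { apply Rminus_eq_contra, (strictly_monotone_inj J); auto. unfold m. intro. nra. }
    repeat apply Rmult_integral_contrapositive_currified; auto; lra. }
  set (A := (1 - t) * f y * (phi y - phi m)) in *.
  assert (Z : A * (t ^ 2 * Derive (Derive f) y * f x - (1 - t) ^ 2 * Derive (Derive f) x * f y)
              = 0).
  { transitivity (f x * f y *
      (t * (1 - t) ^ 2 * (phi x * Derive (Derive f) x - phi m * Derive (Derive f) x)
       + (1 - t) * t ^ 2 * (phi y * Derive (Derive f) y - phi m * Derive (Derive f) y))).
    - transitivity (t ^ 2 * Derive (Derive f) y * f x * ((1 - t) * f y * (phi y - phi m))
        - (1 - t) ^ 2 * Derive (Derive f) x * f y * (t * f x * (phi m - phi x))).
      + rewrite B. unfold A. ring.
      + ring.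
    - rewrite E. ring. }
  apply Rmult_integral in Z as [Z|Z]; [contradiction|].
  pose proof (f_neq0 x Hx). pose proof (f_neq0 y Hy).
  unfold q. apply (Rmult_eq_reg_r (f x * f y)); [|now apply Rmult_integral_contrapositive].
  field_simplify; auto. lra.
Qed.

Lemma ratio_constant : (exists x0, J x0) ->
  exists p, (t - 1 / 2) * p = 0 /\ forall z, J z -> Derive (Derive f) z = p * f z.
Proof.
  intros [x0 Jx0].
  (* Chaining the relation over z - e/2 < z < z + e/2 gives t^2 q z = (1 - t)^2 q z. *)
  assert (T0 : forall z, J z -> (2 * t - 1) * q z = 0).
  { intros z Hz. destruct (open_Rabs J z J_open Hz) as [[e ep] He]. simpl in He.
    assert (J (z - e / 2)) by (apply He; rewrite Rabs_left; lra).
    assert (J (z + e / 2)) by (apply He; rewrite Rabs_right; lra).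
    pose proof (ratio_relation (z - e / 2) z ltac:(auto) Hz ltac:(lra)).
    pose proof (ratio_relation z (z + e / 2) Hz ltac:(auto) ltac:(lra)).
    pose proof (ratio_relation (z - e / 2) (z + e / 2) ltac:(auto) ltac:(auto) ltac:(lra)).
    assert (q z = q (z + e / 2)) by (apply (Rmult_eq_reg_l (t ^ 2)); nra).
    replace (2 * t - 1) with (t ^ 2 - (1 - t) ^ 2) by ring. nra. }
  assert (Qc : forall z, J z -> q z = q x0).
  { intros z Hz. destruct (Req_dec t (1 / 2)) as [Eh|Eh].
    - destruct (Rtotal_order z x0) as [l|[<-|l]]; auto.
      + pose proof (ratio_relation z x0 Hz Jx0 l) as R. rewrite Eh in R. nra.
      + pose proof (ratio_relation x0 z Jx0 Hz l) as R. rewrite Eh in R. nra.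
    - pose proof (T0 z Hz) as T1. pose proof (T0 x0 Jx0) as T2.
      apply Rmult_integral in T1 as [T1|T1]; [lra|].
      apply Rmult_integral in T2 as [T2|T2]; [lra|]. lra. }
  exists (q x0). split.
  - pose proof (T0 x0 Jx0). nra.
  - intros z Hz. rewrite <- (Qc z Hz). unfold q. field. now apply f_neq0.
Qed.

End Smooth_solution.

(** * The equation u'' = p u *)

Definition ode_sol (U : R -> Prop) (p : R) (u : R -> R) : Prop :=
  diff2_on U u /\ forall z, U z -> Derive (Derive u) z = p * u z.

Definition wronskian (u v : R -> R) (z : R) : R := u z * Derive v z - Derive u z * v z.

Lemma ode_sol_ext (U : R -> Prop) (p : R) (u v : R -> R) :
  open U -> (forall z, U z -> u z = v z) -> ode_sol U p u -> ode_sol U p v.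
Proof.
  intros HU Huv [Hu Hu2]. split; [apply (reg_ext _ regularity_diff2 U u); auto|].
  intros z Hz. rewrite <- Huv, <- Hu2 by auto.
  apply (Derive_ext_open U); auto. intros y Hy. symmetry. now apply (Derive_ext_open U).
Qed.

Lemma ode_sol_lin (U : R -> Prop) (p a b : R) (u v : R -> R) :
  open U -> ode_sol U p u -> ode_sol U p v -> ode_sol U p (fun x => a * u x + b * v x).
Proof.
  intros HU [Hu Hu2] [Hv Hv2]. pose proof regularity_diff2 as D.
  assert (Hc : forall c, diff2_on U (fun _ => c)) by (intros c; apply (reg_const _ D); auto).
  split; [apply (reg_plus _ D); auto; apply (reg_mult _ D); auto|].
  intros z Hz. rewrite (Derive_ext_open U _ (fun x => a * Derive u x + b * Derive v x)); auto.
  - destruct (Hu z Hz), (Hv z Hz). apply is_derive_unique. auto_derive; auto. fold_Derive.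
    rewrite Hu2, Hv2 by auto. ring.
  - intros y Hy. destruct (Hu y Hy), (Hv y Hy). apply is_derive_unique.
    auto_derive; auto. fold_Derive. ring.
Qed.

Lemma wronskian_const (U : R -> Prop) (p : R) (u v : R -> R) (x y : R) :
  is_connected U -> ode_sol U p u -> ode_sol U p v -> U x -> U y ->
  wronskian u v x = wronskian u v y.
Proof.
  intros Hc [Hu Hu2] [Hv Hv2].
  assert (K : forall x y, U x -> U y -> x < y -> wronskian u v x = wronskian u v y).
  { intros x' y' Hx Hy Hxy. apply (@eq_is_derive R_NormedModule); auto.
    intros z Hz. assert (Uz : U z) by (apply (Hc x' y'); auto; lra).
    destruct (Hu z Uz), (Hv z Uz). unfold wronskian. auto_derive; [repeat split; auto|].
    fold_Derive. rewrite Hu2, Hv2 by auto. change (zero : R) with 0. ring. }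
  intros Hx Hy. destruct (Rtotal_order x y) as [l|[<-|l]]; auto. symmetry. now apply K.
Qed.

(* Cramer's rule for the constant Wronskians of three solutions. *)
Lemma ode_sol_decompose (U : R -> Prop) (p : R) (f g u : R -> R) (x0 z : R) :
  is_connected U -> ode_sol U p f -> ode_sol U p g -> ode_sol U p u -> U x0 -> U z ->
  wronskian f g x0 <> 0 ->
  u z = wronskian u g x0 / wronskian f g x0 * f z + wronskian f u x0 / wronskian f g x0 * g z.
Proof.
  intros Hc Hf Hg Hu Hx0 Hz Hw.
  rewrite <- (wronskian_const U p u g z x0), <- (wronskian_const U p f u z x0),
    <- (wronskian_const U p f g z x0) in * by auto.
  unfold wronskian in *. field. auto.
Qed.

Lemma ode_sol_change_basis (J : R -> Prop) (p : R) (f g u v : R -> R) (x0 : R) :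
  is_connected J -> ode_sol J p f -> ode_sol J p g -> ode_sol J p u -> ode_sol J p v -> J x0 ->
  wronskian f g x0 <> 0 -> wronskian u v x0 <> 0 ->
  exists c1 c2 c3 c4, c1 * c4 <> c3 * c2 /\
    forall z, J z -> u z = c1 * f z + c2 * g z /\ v z = c3 * f z + c4 * g z.
Proof.
  intros Hc Hf Hg Hu Hv Hx0 Wfg Wuv. set (c := wronskian f g x0).
  exists (wronskian u g x0 / c), (wronskian f u x0 / c),
    (wronskian v g x0 / c), (wronskian f v x0 / c). split.
  - intro E. apply Wuv.
    transitivity (c * (wronskian u g x0 / c * (wronskian f v x0 / c)
                       - wronskian v g x0 / c * (wronskian f u x0 / c))); [|rewrite E; ring].
    unfold c in *. unfold wronskian in *. field. exact Wfg.
  - intros z Hz. split; now apply (ode_sol_decompose J p).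
Qed.

Lemma wronskian_mult (f phi : R -> R) (z : R) : ex_derive f z -> ex_derive phi z ->
  wronskian f (fun x => f x * phi x) z = f z ^ 2 * Derive phi z.
Proof. intros Hf Hp. unfold wronskian. rewrite Derive_mult by auto. ring. Qed.

(* A vanishing Wronskian f^2 phi' would make phi constant. *)
Lemma wronskian_mult_neq0 (J : R -> Prop) (p : R) (f phi : R -> R) (x0 : R) :
  open J -> is_connected J -> ode_sol J p f -> ode_sol J p (fun x => f x * phi x) ->
  diff2_on J phi -> (forall x, J x -> f x <> 0) -> strictly_monotone J phi -> J x0 ->
  wronskian f (fun x => f x * phi x) x0 <> 0.
Proof.
  intros Ho Hc Sf Sg Hp Hn Hm Jx0 W0.
  destruct (open_Rabs J x0 Ho Jx0) as [[e ep] He]. simpl in He.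
  assert (J1 : J (x0 + e / 2)) by (apply He; rewrite Rabs_right; lra).
  apply (strictly_monotone_inj J phi x0 (x0 + e / 2)); auto; [lra|].
  apply (@eq_is_derive R_NormedModule); [|lra]. intros z Hz.
  assert (Jz : J z) by (apply (Hc x0 (x0 + e / 2)); auto; lra).
  destruct (proj1 Sf z Jz), (Hp z Jz).
  assert (W : f z ^ 2 * Derive phi z = 0).
  { rewrite <- wronskian_mult by auto. now rewrite (wronskian_const J p _ _ z x0). }
  apply Rmult_integral in W as [W|W]; [now apply (pow_nonzero (f z) 2) in W; auto|].
  assert (D : is_derive phi z (Derive phi z)) by now apply Derive_correct.
  rewrite W in D. exact D.
Qed.

Lemma cosh2_sinh2 (u : R) : cosh u * cosh u - sinh u * sinh u = 1.
Proof.
  unfold cosh, sinh.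
  assert (exp u * exp (- u) = 1) by (rewrite <- exp_plus, Rplus_opp_r; apply exp_0).
  nra.
Qed.

Lemma is_derive_sinh_lin (k x : R) : is_derive (fun y => sinh (k * y)) x (k * cosh (k * x)).
Proof.
  apply (is_derive_comp sinh (fun y => k * y) x (cosh (k * x)) k).
  - apply is_derive_Reals, derivable_pt_lim_sinh.
  - auto_derive; auto. ring.
Qed.

Lemma is_derive_cosh_lin (k x : R) : is_derive (fun y => cosh (k * y)) x (k * sinh (k * x)).
Proof.
  apply (is_derive_comp cosh (fun y => k * y) x (sinh (k * x)) k).
  - apply is_derive_Reals, derivable_pt_lim_cosh.
  - auto_derive; auto. ring.
Qed.

Lemma S_C_derive (p : R) : exists S1 C1 : R -> R, forall x,
  is_derive (S_ p) x (S1 x) /\ is_derive S1 x (p * S_ p x) /\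
  is_derive (C_ p) x (C1 x) /\ is_derive C1 x (p * C_ p x) /\
  S_ p x * C1 x - S1 x * C_ p x <> 0.
Proof.
  unfold S_, C_. destruct (Rlt_dec p 0) as [Hp|Hp]; [|destruct (Req_EM_T p 0) as [H0|H0]].
  - set (k := sqrt (- p)). assert (Hk : k * k = - p) by (apply sqrt_sqrt; lra).
    assert (k0 : 0 < k) by (apply sqrt_lt_R0; lra). clearbody k.
    exists (fun x => k * cos (k * x)), (fun x => - k * sin (k * x)). intros x.
    replace p with (- (k * k)) by lra.
    split; [|split; [|split; [|split]]]; try (auto_derive; auto; ring).
    pose proof (sin2_cos2 (k * x)) as E. unfold Rsqr in E.
    replace (sin (k * x) * (- k * sin (k * x)) - k * cos (k * x) * cos (k * x))
      with (- k * (sin (k * x) * sin (k * x) + cos (k * x) * cos (k * x))) by ring.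
    rewrite E. lra.
  - exists (fun _ => 1), (fun _ => 0). intros x.
    split; [|split; [|split; [|split]]]; try (auto_derive; auto; subst; ring). lra.
  - set (k := sqrt p). assert (Hk : k * k = p) by (apply sqrt_sqrt; lra).
    assert (k0 : 0 < k) by (apply sqrt_lt_R0; lra). clearbody k. subst p.
    exists (fun x => k * cosh (k * x)), (fun x => k * sinh (k * x)). intros x.
    split; [|split; [|split; [|split]]].
    + apply is_derive_sinh_lin.
    + replace (k * k * sinh (k * x)) with (k * (k * sinh (k * x))) by ring.
      apply (is_derive_scal (fun y => cosh (k * y))), is_derive_cosh_lin.
    + apply is_derive_cosh_lin.
    + replace (k * k * cosh (k * x)) with (k * (k * cosh (k * x))) by ring.
      apply (is_derive_scal (fun y => sinh (k * y))), is_derive_sinh_lin.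
    + pose proof (cosh2_sinh2 (k * x)) as E.
      replace (sinh (k * x) * (k * sinh (k * x)) - k * cosh (k * x) * cosh (k * x))
        with (- k * (cosh (k * x) * cosh (k * x) - sinh (k * x) * sinh (k * x))) by ring.
      rewrite E. lra.
Qed.

Lemma ode_sol_S_C (U : R -> Prop) (p : R) :
  ode_sol U p (S_ p) /\ ode_sol U p (C_ p) /\ forall x, wronskian (S_ p) (C_ p) x <> 0.
Proof.
  destruct (S_C_derive p) as [S1 [C1 H]].
  assert (ES : forall z, Derive (S_ p) z = S1 z) by (intros z; apply is_derive_unique, (H z)).
  assert (EC : forall z, Derive (C_ p) z = C1 z) by (intros z; apply is_derive_unique, (H z)).
  split; [|split].
  - split; intros z _; destruct (H z) as [h1 [h2 _]].
    + split; [now exists (S1 z)|]. apply (ex_derive_ext S1); [intros; now rewrite ES|].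
      now exists (p * S_ p z).
    + rewrite (Derive_ext _ S1) by auto. now apply is_derive_unique.
  - split; intros z _; destruct (H z) as [_ [_ [h3 [h4 _]]]].
    + split; [now exists (C1 z)|]. apply (ex_derive_ext C1); [intros; now rewrite EC|].
      now exists (p * C_ p z).
    + rewrite (Derive_ext _ C1) by auto. now apply is_derive_unique.
  - intros x. unfold wronskian. rewrite ES, EC. apply (H x).
Qed.

Lemma S_C_mean (p x y : R) :
  (S_ p x + S_ p y) / 2 = S_ p ((x + y) / 2) * C_ p ((y - x) / 2) /\
  (C_ p x + C_ p y) / 2 = C_ p ((x + y) / 2) * C_ p ((y - x) / 2).
Proof.
  unfold S_, C_.
  assert (Ex : forall k, k * x = k * ((x + y) / 2) - k * ((y - x) / 2)) by (intros; field).
  assert (Ey : forall k, k * y = k * ((x + y) / 2) + k * ((y - x) / 2)) by (intros; field).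
  destruct (Rlt_dec p 0); [|destruct (Req_EM_T p 0)].
  - rewrite (Ex (sqrt (- p))), (Ey (sqrt (- p))), sin_minus, sin_plus, cos_minus, cos_plus.
    split; field.
  - split; field.
  - rewrite (Ex (sqrt p)), (Ey (sqrt p)).
    unfold sinh, cosh, Rminus. rewrite !Ropp_plus_distr, !exp_plus, !Ropp_involutive.
    split; field.
Qed.

(* For t = 1/2 this is the addition theorem; otherwise p = 0 and the solutions are affine. *)
Lemma S_C_weighted_mean (p t x y : R) : (t - 1 / 2) * p = 0 ->
  exists k, forall al be,
    t * (al * S_ p x + be * C_ p x) + (1 - t) * (al * S_ p y + be * C_ p y)
    = k * (al * S_ p (t * x + (1 - t) * y) + be * C_ p (t * x + (1 - t) * y)).
Proof.
  intros Hp. destruct (Req_dec t (1 / 2)) as [->|Eh].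
  - exists (C_ p ((y - x) / 2)). intros al be. destruct (S_C_mean p x y) as [h1 h2].
    replace (1 / 2 * x + (1 - 1 / 2) * y) with ((x + y) / 2) by field.
    transitivity (al * ((S_ p x + S_ p y) / 2) + be * ((C_ p x + C_ p y) / 2)); [field|].
    rewrite h1, h2. ring.
  - assert (p = 0) as -> by (apply Rmult_integral in Hp as [Hp|Hp]; [lra | auto]).
    exists 1. intros al be. unfold S_, C_.
    destruct (Rlt_dec 0 0); [lra|]. destruct (Req_EM_T 0 0); [ring | congruence].
Qed.

Lemma pair_equiv_on_inv (a b : Rbar) (f g h k : R -> R) :
  pair_equiv_on a b f g h k -> exists d1 d2 d3 d4, forall x, in_I a b x ->
    f x = d1 * h x + d2 * k x /\ g x = d3 * h x + d4 * k x.
Proof.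
  intros [c1 [c2 [c3 [c4 [Hd Hrep]]]]].
  set (D := c1 * c4 - c3 * c2). assert (D0 : D <> 0) by (unfold D; lra).
  exists (c4 / D), (- c2 / D), (- c3 / D), (c1 / D). intros x Hx.
  destruct (Hrep x Hx) as [-> ->]. unfold D in *. split; field; auto.
Qed.

Definition assertion_ii (a b : Rbar) (phi f : R -> R) (t : R) : Prop :=
  (forall x, in_I a b x -> f x <> 0) /\
  twice_diff_on a b f /\ twice_diff_on a b phi /\
  (forall x, in_I a b x -> 2 * Derive f x * Derive phi x + f x * Derive_n phi 2 x = 0) /\
  (exists p : R, (t - 1/2) * p = 0 /\ forall x, in_I a b x -> Derive_n f 2 x = p * f x).

Definition assertion_iii (a b : Rbar) (phi f : R -> R) (t : R) : Prop :=
  (forall x, in_I a b x -> f x <> 0) /\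
  exists p : R, (t - 1/2) * p = 0 /\ pair_equiv_on a b f (fun x => f x * phi x) (S_ p) (C_ p).

Lemma i_to_ii (a b : Rbar) (phi f : R -> R) (t : R) :
  strictly_monotone_on a b phi -> (exists x0, in_I a b x0 /\ f x0 <> 0) -> 0 < t < 1 ->
  mean_equation (in_I a b) f phi t -> assertion_ii a b phi f t.
Proof.
  intros Hm Hx0 Ht Hfe. apply strictly_monotone_on_in_I in Hm.
  pose proof (open_in_I a b) as Ho. pose proof (is_connected_in_I a b) as Hc.
  destruct (solution_diff2 _ f phi t Ho Hc Ht Hfe Hm Hx0) as [Hf Hp].
  pose proof (solution_f_neq0 _ f phi t Hc Ht Hfe Hm Hx0) as Hn.
  split; [|split; [|split; [|split]]]; auto.
  - intros z Hz. now apply (solution_phi_ode (in_I a b) f phi t).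
  - destruct Hx0 as [x0 [Hx0 _]]. apply (ratio_constant _ f phi t); eauto.
Qed.

(* Both f and f phi solve u'' = p u and are independent, so they span the solutions,
   among them S_p and C_p. *)
Lemma ii_to_iii (a b : Rbar) (phi f : R -> R) (t : R) :
  strictly_monotone_on a b phi -> (exists x0, in_I a b x0) ->
  assertion_ii a b phi f t -> assertion_iii a b phi f t.
Proof.
  intros Hm [x0 Jx0] [Hn [Hf [Hp [Hode [p [Hp0 Hfp]]]]]].
  apply strictly_monotone_on_in_I in Hm.
  pose proof (open_in_I a b) as Ho. pose proof (is_connected_in_I a b) as Hc.
  split; auto. exists p. split; auto.
  assert (Sf : ode_sol (in_I a b) p f) by (split; auto).
  assert (Sg : ode_sol (in_I a b) p (fun x => f x * phi x)).
  { split; [now apply diff2_on_mult|].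
    intros z Hz. rewrite (Derive2_mult _ f phi z Ho Hf Hp Hz).
    pose proof (Hode z Hz) as O1. pose proof (Hfp z Hz) as O2.
    change (Derive_n phi 2 z) with (Derive (Derive phi) z) in O1.
    change (Derive_n f 2 z) with (Derive (Derive f) z) in O2. rewrite O2. lra. }
  destruct (ode_sol_S_C (in_I a b) p) as [SS [SC Wsc]].
  apply (ode_sol_change_basis (in_I a b) p _ _ _ _ x0); auto.
  now apply (wronskian_mult_neq0 (in_I a b) p).
Qed.

Lemma iii_to_ii (a b : Rbar) (phi f : R -> R) (t : R) :
  assertion_iii a b phi f t -> assertion_ii a b phi f t.
Proof.
  intros [Hn [p [Hp0 Heq]]].
  destruct (pair_equiv_on_inv _ _ _ _ _ _ Heq) as [d1 [d2 [d3 [d4 Hrep]]]].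
  set (J := in_I a b) in *. pose proof (open_in_I a b) as Ho. fold J in Ho.
  destruct (ode_sol_S_C J p) as [SS [SC _]].
  assert (Sf : ode_sol J p f).
  { apply (ode_sol_ext J p (fun x => d1 * S_ p x + d2 * C_ p x)); auto.
    - intros z Hz. symmetry. apply Hrep, Hz.
    - now apply ode_sol_lin. }
  assert (Sg : ode_sol J p (fun x => f x * phi x)).
  { apply (ode_sol_ext J p (fun x => d3 * S_ p x + d4 * C_ p x)); auto.
    - intros z Hz. symmetry. apply Hrep, Hz.
    - now apply ode_sol_lin. }
  destruct Sf as [Hf Hf2], Sg as [Hg Hg2].
  assert (Hp : diff2_on J phi).
  { apply (reg_ext _ regularity_diff2 J (fun z => f z * phi z / f z)); auto.
    - intros z Hz. field. auto.
    - now apply diff2_on_div. }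
  split; [|split; [|split; [|split]]]; auto.
  - intros z Hz. change (Derive_n phi 2 z) with (Derive (Derive phi) z).
    pose proof (Derive2_mult J f phi z Ho Hf Hp Hz) as E. rewrite Hg2, Hf2 in E by auto. lra.
  - now exists p.
Qed.

(* Both sides equal k (f phi)(m), by the weighted mean identity for f and for f phi. *)
Lemma iii_to_i (a b : Rbar) (phi f : R -> R) (t : R) :
  0 < t < 1 -> assertion_iii a b phi f t -> mean_equation (in_I a b) f phi t.
Proof.
  intros Ht [_ [p [Hp0 Heq]]] x y Hx Hy.
  destruct (pair_equiv_on_inv _ _ _ _ _ _ Heq) as [d1 [d2 [d3 [d4 Hrep]]]].
  destruct (S_C_weighted_mean p t x y Hp0) as [k K].
  set (m := t * x + (1 - t) * y) in *.
  assert (Hm : in_I a b m) by (apply is_connected_comb; auto using is_connected_in_I; lra).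
  destruct (Hrep x Hx) as [Fx Gx], (Hrep y Hy) as [Fy Gy], (Hrep m Hm) as [Fm Gm].
  rewrite (Rmult_assoc t), (Rmult_assoc (1 - t)), Gx, Gy, K, <- Gm, Fx, Fy, K, <- Fm. ring.
Qed.

Theorem theorem2p2 (a b : Rbar) (phi f : R -> R) (t : R) :
  Rbar_lt a b ->
  strictly_monotone_on a b phi ->
  (exists x0, in_I a b x0 /\ f x0 <> 0) ->
  0 < t < 1 ->
  ((forall x y, in_I a b x -> in_I a b y ->
      (t * f x + (1 - t) * f y) * phi (t * x + (1 - t) * y)
      = t * f x * phi x + (1 - t) * f y * phi y)
   <->
   ((forall x, in_I a b x -> f x <> 0) /\
    twice_diff_on a b f /\ twice_diff_on a b phi /\
    (forall x, in_I a b x ->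
       2 * Derive f x * Derive phi x + f x * Derive_n phi 2 x = 0) /\
    (exists p : R, (t - 1/2) * p = 0 /\
       forall x, in_I a b x -> Derive_n f 2 x = p * f x)))
  /\
  ((forall x, in_I a b x -> f x <> 0) /\
    twice_diff_on a b f /\ twice_diff_on a b phi /\
    (forall x, in_I a b x ->
       2 * Derive f x * Derive phi x + f x * Derive_n phi 2 x = 0) /\
    (exists p : R, (t - 1/2) * p = 0 /\
       forall x, in_I a b x -> Derive_n f 2 x = p * f x)
   <->
   ((forall x, in_I a b x -> f x <> 0) /\
    exists p : R, (t - 1/2) * p = 0 /\
      pair_equiv_on a b f (fun x => f x * phi x) (S_ p) (C_ p))).
Proof.
  intros _ Hm Hx0 Ht. (* a < b follows from x0 in I *)
  assert (Hne : exists x0, in_I a b x0) by (destruct Hx0 as [x0 [Hx0 _]]; now exists x0).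
  split; split.
  - now apply i_to_ii.
  - intros H. now apply iii_to_i, ii_to_iii.
  - now apply ii_to_iii.
  - apply iii_to_ii.
Qed.
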